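(* Let $k$ be a field of characteristic $0$, let $\mathcal C$ be a small category with finitely many objects $X_1,\dots,X_n$, and let $\alpha:L(\mathcal C)\to k$ be a pseudocharacter of $\mathcal C$. Let $A$ be the $k$-algebra of matrices $x=(x_{ij})_{1\le i,j\le n}$ with $x_{ij}\in k\,\mathrm{Hom}_{\mathcal C}(X_j,X_i)$ (finite $k$-linear combinations of morphisms), with multiplication $(xy)_{ij}=\sum_{l}x_{il}y_{lj}$ given by bilinearly extended composition (i.e. $A=\mathrm{End}(X_1\oplus\dots\oplus X_n)$ in the additive envelope of the $k$-linearization of $\mathcal C$), and let $\tau:A\to k$, $\tau(x)=\sum_{i=1}^n\alpha_{X_i}(x_{ii})$. Then $\tau(xy)=\tau(yx)$, $\tau$ is a pseudocharacter of $A$, and $$\deg_\tau(A)=\sum_{i=1}^n\deg_\alpha(X_i).$$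
   Context: Loops. $L(\mathcal C)$ is the set of pairs $(X,\beta)$, $\beta\in\mathrm{End}_{\mathcal C}(X)$, modulo the equivalence relation generated by $(X,\gamma\beta)\sim(Y,\beta\gamma)$ for $\beta:X\to Y$, $\gamma:Y\to X$. Pseudocharacters of algebras. For a $k$-algebra $A$ and a $k$-linear $\tau:A\to k$ with $\tau(ab)=\tau(ba)$, and $a_1,\dots,a_n\in A$, set $S^\tau_n(a_1,\dots,a_n)=\sum_{\sigma\in S_n}\mathrm{sgn}(\sigma)\prod_{c}\tau(a_{i_1}a_{i_2}\cdots a_{i_r})$, the product over all cycles $c=(i_1\,i_2\,\dots\,i_r)$ of $\sigma$ (fixed points included), where $\sigma(i_j)=i_{j+1}$. (This is the $\alpha$-evaluation of the closure of $(a_1\otimes\dots\otimes a_n)$ composed with the antisymmetrizer $\sum_\sigma\mathrm{sgn}(\sigma)\sigma$ in the Brauer category.) The degree $\deg_\tau(A)$ is the least integer $d\ge0$ such that $S^\tau_{d+1}$ vanishes identically on $A^{d+1}$ ($\infty$ if none); $\tau$ is a pseudocharacter of $A$ if $\deg_\tau(A)<\infty$. Pseudocharacters of categories. For $\alpha:L(\mathcal C)\to k$ and an object $X$, let $\alpha_X:k\,\mathrm{End}_{\mathcal C}(X)\to k$ be the linear extension of $\beta\mapsto\alpha([(X,\beta)])$ (it satisfies $\alpha_X(ab)=\alpha_X(ba)$). Put $\deg_\alpha(X)=\deg_{\alpha_X}(k\,\mathrm{End}_{\mathcal C}(X))$. The map $\alpha$ is a pseudocharacter of $\mathcal C$ (equivalently,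 a pseudo-TQFT for the Brauer envelope of $\mathcal C$) if $\deg_\alpha(X)<\infty$ for every object $X$. *)

From HB Require Import structures.
From mathcomp Require Import all_boot all_order all_algebra all_fingroup.
From mathcomp Require Import finmap.
From mathcomp Require Import boolp.
Set Implicit Arguments. Unset Strict Implicit. Unset Printing Implicit Defensive.
Import Order.TTheory GRing.Theory Num.Theory.
Local Open Scope ring_scope.
Local Open Scope fset_scope.

(* Pseudocharacters of (possibly non-unital) k-algebras, given only    *)
(* through their multiplication and a trace-like map tau : T -> k.     *)
Section Pseudo.
Variables (k : fieldType) (T : Type) (mul : T -> T -> T) (tau : T -> k).

Definition cycle_rep (m : nat) (s : 'S_m) (i : 'I_m) : bool :=
  [forall j in porbit s i, (i <= j)%N].

(* a_{i} a_{s i} a_{s^2 i} ... a_{s^(r-1) i}, r = length of the cycle of i *)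
Definition cycle_prod (m : nat) (s : 'S_m) (a : 'I_m -> T) (i : 'I_m) : T :=
  foldl (fun acc e => mul acc (a ((s ^+ e)%g i))) (a i)
        (iota 1 (#|porbit s i|).-1).

Definition Spc (m : nat) (a : 'I_m -> T) : k :=
  \sum_(s : 'S_m) (-1) ^+ odd_perm s *
     \prod_(i : 'I_m | cycle_rep s i) tau (cycle_prod s a i).

Definition Svanishes (m : nat) : Prop := forall a : 'I_m -> T, Spc a = 0.

Definition is_degree (d : nat) : Prop :=
  Svanishes d.+1 /\ forall e : nat, (e < d)%N -> ~ Svanishes e.+1.

Definition pseudochar : Prop := exists d : nat, Svanishes d.+1.

End Pseudo.

(* Small categories with objects X_0, ..., X_{n-1} (indexed by 'I_n).  *)
(* comp g f = g o f.                                                    *)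
Record fincat (n : nat) := FinCat {
  Mor : 'I_n -> 'I_n -> Type;
  comp : forall i j l : 'I_n, Mor j l -> Mor i j -> Mor i l;
  idm : forall i : 'I_n, Mor i i;
  compA : forall (i j l m : 'I_n) (h : Mor l m) (g : Mor j l) (f : Mor i j),
      comp h (comp g f) = comp (comp h g) f;
  comp1m : forall (i j : 'I_n) (f : Mor i j), comp (idm j) f = f;
  compm1 : forall (i j : 'I_n) (f : Mor i j), comp f (idm i) = f
}.
Arguments comp {n} _ {i j l}.

Section Linearization.
Variables (k : fieldType) (n : nat) (C : fincat n).

(* k Hom(X_i, X_j): finitely supported functions Mor(X_i,X_j) -> k *)
Definition kHom (i j : 'I_n) := {fsfun {classic (Mor C i j)} -> k for fun=> 0}.

Definition kadd (i j : 'I_n) (f g : kHom i j) : kHom i j :=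
  [fsfun c in finsupp f `|` finsupp g => (f c + g c)%R].

Definition kzero (i j : 'I_n) : kHom i j := [fsfun for fun=> 0].

(* bilinear extension of composition: (f o g) *)
Definition kcomp (i j l : 'I_n) (f : kHom j l) (g : kHom i j) : kHom i l :=
  [fsfun c in [fset (comp C a b : {classic (Mor C i l)})
                 | a : {classic (Mor C j l)} in finsupp f,
                   b : {classic (Mor C i j)} in finsupp g] =>
     \sum_(a <- finsupp f) \sum_(b <- finsupp g)
        (if (comp C a b : {classic (Mor C i l)}) == c then f a * g b else 0)].

(* Loop functions alpha : L(C) -> k, presented as functions on pairs
   (X, beta) which are constant on the generating relation. *)
Definition loop_fun (alpha : forall i : 'I_n, Mor C i i -> k) : Prop :=
  forall (i j : 'I_n) (b : Mor C i j) (g : Mor C j i),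
    alpha i (comp C g b) = alpha j (comp C b g).

Definition alphaX (alpha : forall i : 'I_n, Mor C i i -> k) (i : 'I_n)
  (f : kHom i i) : k :=
  \sum_(b <- finsupp f) f b * alpha i b.

Definition deg_alpha_is alpha (i : 'I_n) (d : nat) : Prop :=
  is_degree (fun f g : kHom i i => kcomp f g) (@alphaX alpha i) d.

Definition cat_pseudochar alpha : Prop :=
  forall i : 'I_n, pseudochar (fun f g : kHom i i => kcomp f g) (@alphaX alpha i).

Definition Amat := forall i j : 'I_n, kHom j i.

Definition Amul (x y : Amat) : Amat :=
  fun i j => \big[@kadd j i / kzero j i]_(l < n) kcomp (x i l) (y l j).

Definition Atau alpha (x : Amat) : k := \sum_(i < n) @alphaX alpha i (x i i).

End Linearization.

(* Everything rests on one identity for the functions S^tau_m attached to an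
   associative multiplication with a trace-like map tau (tau(xy) = tau(yx)).
   Singling out a slot l, every permutation of m+1 points either fixes l or
   inserts l just before some point y in a cycle of a permutation of the other
   m points (flipping the sign), whence the expansion formula
     S_{m+1}(a) = tau(a_l) S_m(a without l) - sum_y S_m(a with a_l a_y at y).
   Consequences, proved for abstract (T, mul, tau): vanishing of S_{d+1}
   propagates to every S_{e+1}, e >= d; with a unit, S_m(1,...,1) =
   prod_{i<m} (tau 1 - i), so in characteristic 0 the degree equals tau(1);
   S_m is additive in each slot and is preserved by trace-preserving
   multiplicative maps.

   For the matrix algebra A we then show, after developing the bilinear
   composition on k Hom, that tau is a trace, and that S_m vanishes on A when
   m > sum_c deg(X_c): by multilinearity it suffices to take matrices with a
   single nonzero entry; the expansion formula merges such entries without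
   changing their columns; a tuple with all entries in column c either has an
   off-diagonal entry (trace 0, so S_m = 0) or lives in k End(X_c); hence
   S_m = 0 once column c occurs more than deg(X_c) times, which happens by
   pigeonhole.  Minimality follows from tau(1_A) = sum_c alpha(id_{X_c}) =
   sum_c deg(X_c). *)

From Pilot Require Import Defs.
From mathcomp Require Import all_boot all_order all_algebra all_fingroup.
From mathcomp Require Import finmap boolp.

Set Implicit Arguments.
Unset Strict Implicit.
Unset Printing Implicit Defensive.
Import GRing.Theory.

Section PermCycles.
Variable m : nat.
Implicit Types (s : 'S_m) (x y : 'I_m).

Lemma permX0 s x : (s ^+ 0)%g x = x.
Proof. by rewrite expg0 perm1. Qed.

Lemma permXS s e x : (s ^+ e.+1)%g x = s ((s ^+ e)%g x).
Proof. by rewrite expgSr permM. Qed.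

Lemma permSX s e x : (s ^+ e.+1)%g x = (s ^+ e)%g (s x).
Proof. by rewrite expgS permM. Qed.

Lemma porbit_size_gt0 s x : 0 < #|porbit s x|.
Proof. by rewrite lt0n card_porbit_neq0. Qed.

Lemma porbit_size_ret s x : (s ^+ #|porbit s x|)%g x = x.
Proof. by rewrite permX iter_porbit. Qed.

Lemma porbit_iter_neq s x e : 0 < e < #|porbit s x| -> (s ^+ e)%g x != x.
Proof.
case/andP=> e_gt0 e_lt; have := nth_uniq x _ _ (uniq_traject_porbit s x).
rewrite size_traject => /(_ e 0 e_lt (porbit_size_gt0 s x)).
by rewrite !nth_traject ?porbit_size_gt0 //= permX => ->; rewrite -lt0n.
Qed.

Lemma porbit_size_eq s x r : 0 < r -> (s ^+ r)%g x = x ->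
  (forall e, 0 < e < r -> (s ^+ e)%g x != x) -> #|porbit s x| = r.
Proof.
move=> r_gt0 ret min_r; have p_gt0 := porbit_size_gt0 s x.
case: (ltngtP #|porbit s x| r) => // [lt|gt].
  by have := min_r _ (introT andP (conj p_gt0 lt)); rewrite porbit_size_ret eqxx.
by have := porbit_iter_neq (introT andP (conj r_gt0 gt)); rewrite ret eqxx.
Qed.

Lemma porbit_iter_lt s x y : y \in porbit s x ->
  exists2 e, e < #|porbit s x| & y = (s ^+ e)%g x.
Proof. by rewrite porbit_traject => /trajectP [e lt ->]; exists e; rewrite ?permX. Qed.

Lemma porbit_eq s x y : y \in porbit s x -> porbit s y = porbit s x.
Proof. by rewrite -eq_porbit_mem => /eqP. Qed.

End PermCycles.

Lemma porbit_size_transport m m' (s : 'S_m) (t : 'S_m') x y (f : 'I_m -> 'I_m') :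
  injective f -> (forall e, (t ^+ e)%g y = f ((s ^+ e)%g x)) ->
  #|porbit t y| = #|porbit s x|.
Proof.
move=> f_inj tsf; apply: porbit_size_eq; first exact: porbit_size_gt0.
  by rewrite tsf porbit_size_ret -(permX0 s x) -tsf permX0.
move=> e e_bd; rewrite tsf -(permX0 t y) tsf permX0 (inj_eq f_inj).
exact: porbit_iter_neq.
Qed.

Definition cycle_transversal m (s : 'S_m) (Q : pred 'I_m) : Prop :=
  (forall x, exists2 j, j \in porbit s x & Q j) /\
  (forall z z', Q z -> Q z' -> z' \in porbit s z -> z' = z).

Lemma cycle_rep_transversal m (s : 'S_m) : cycle_transversal s (cycle_rep s).
Proof.
split=> [x|z z' /forallP rep_z /forallP rep_z' zz'].
  have [j jx j_min] := arg_minnP (fun j : 'I_m => nat_of_ord j) (porbit_id s x).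
  exists j => //; apply/forallP => w; apply/implyP => wj.
  by apply: j_min; rewrite -(porbit_eq jx).
apply/val_inj/eqP; rewrite eqn_leq (implyP (rep_z' z)) ?(implyP (rep_z z')) //.
by rewrite porbit_sym.
Qed.

Section TransversalProd.
Variables (R : comPzRingType) (m : nat) (s : 'S_m) (f : 'I_m -> R).
Hypothesis f_cycle_inv : forall x e, f ((s ^+ e)%g x) = f x.
Local Open Scope ring_scope.

Lemma prod_cycle_transversal (Q : pred 'I_m) x : cycle_transversal s Q ->
  \prod_(i | Q i && (porbit s i == porbit s x)) f i = f x.
Proof.
case=> meet uniqQ; have [j jx Qj] := meet x.
rewrite (big_pred1 j); first by case/porbitP: jx => e ->; rewrite f_cycle_inv.
move=> i /=; rewrite eq_porbit_mem; apply/andP/eqP => [[Qi ix]|->//].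
by apply: uniqQ Qj Qi _; rewrite (porbit_eq jx).
Qed.

Lemma prod_transversal_eq (Q Q' : pred 'I_m) :
  cycle_transversal s Q -> cycle_transversal s Q' ->
  \prod_(i | Q i) f i = \prod_(i | Q' i) f i.
Proof.
move=> tQ tQ'; have in_porbits i : porbit s i \in porbits s by apply: imset_f.
rewrite (partition_big _ _ (fun i _ => in_porbits i)).
rewrite [RHS](partition_big _ _ (fun i _ => in_porbits i)).
by apply: eq_bigr => _ /imsetP [x _ ->]; rewrite !prod_cycle_transversal.
Qed.

End TransversalProd.

Lemma eq_foldl_in (A B : Type) (P : pred B) (f g : A -> B -> A) x (l : seq B) :
  (forall acc e, P e -> f acc e = g acc e) -> all P l -> foldl f x l = foldl g x l.
Proof. by move=> fg; elim: l x => //= e l IH x /andP [Pe Pl]; rewrite fg ?IH. Qed.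

Lemma foldl_map (A B C : Type) (f : A -> B -> A) (h : C -> B) x (l : seq C) :
  foldl f x (map h l) = foldl (fun acc c => f acc (h c)) x l.
Proof. by elim: l x => //= c l IH x; rewrite IH. Qed.

Section CycleProducts.
Variables (k : fieldType) (T : Type) (mul : T -> T -> T) (tau : T -> k).
Local Notation cp := (cycle_prod mul).

Lemma cycle_prod_transport m m' (s : 'S_m) (t : 'S_m') x y (f : 'I_m -> 'I_m')
    (a : 'I_m -> T) (b : 'I_m' -> T) :
  injective f -> (forall e, (t ^+ e)%g y = f ((s ^+ e)%g x)) ->
  (forall e, b (f ((s ^+ e)%g x)) = a ((s ^+ e)%g x)) ->
  cp t b y = cp s a x.
Proof.
move=> f_inj tsf ba; rewrite /cycle_prod (porbit_size_transport f_inj tsf).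
have -> : b y = a x by rewrite -(permX0 t y) tsf -{2}(permX0 s x) ba.
by apply: (@eq_foldl_in _ _ predT) (all_predT _) => acc e _; rewrite tsf ba.
Qed.

Lemma cycle_prod_eq_on m (s : 'S_m) x (a b : 'I_m -> T) :
  (forall e, a ((s ^+ e)%g x) = b ((s ^+ e)%g x)) -> cp s a x = cp s b x.
Proof. by move=> ab; apply: (@cycle_prod_transport _ _ s s x x id) => // e; rewrite ab. Qed.

Hypothesis mulA : associative mul.
Hypothesis tauC : forall x y, tau (mul x y) = tau (mul y x).

Lemma foldl_mulA (g : nat -> T) x y l :
  foldl (fun acc e => mul acc (g e)) (mul x y) l =
  mul x (foldl (fun acc e => mul acc (g e)) y l).
Proof. by elim: l y => //= e l IH y; rewrite -mulA IH. Qed.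

Lemma tau_cycle_prod_rot m (s : 'S_m) a x : tau (cp s a (s x)) = tau (cp s a x).
Proof.
rewrite /cycle_prod.
have -> : porbit s (s x) = porbit s x by have := porbit_perm s 1 x; rewrite expg1.
have ret := porbit_size_ret s x; move: (porbit_size_gt0 s x) ret.
case: #|porbit s x| => // -[_|r _ ret]; first by rewrite expg1 /= => ->.
have iota_rcons : iota 1 r.+1 = rcons (iota 1 r) r.+1.
  by rewrite -[in LHS](addn1 r) iotaD /= add1n cats1.
rewrite [in LHS]iota_rcons foldl_rcons -permSX ret /= foldl_mulA.
have -> : iota 2 r = map S (iota 1 r) by rewrite -(iotaDl 1).
rewrite expg1 foldl_map tauC.
congr (tau (mul _ _)).
by apply: (@eq_foldl_in _ _ predT) (all_predT _) => acc e _; rewrite permSX.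
Qed.

Lemma tau_cycle_prod_iter m (s : 'S_m) a x e :
  tau (cp s a ((s ^+ e)%g x)) = tau (cp s a x).
Proof. by elim: e => [|e IH]; rewrite ?permX0 // permXS tau_cycle_prod_rot. Qed.

Local Open Scope ring_scope.

Definition cycle_weight m (s : 'S_m) (a : 'I_m -> T) : k :=
  \prod_(i | cycle_rep s i) tau (cp s a i).

Lemma SpcE m (a : 'I_m -> T) :
  Spc mul tau a = \sum_(s : 'S_m) (-1) ^+ odd_perm s * cycle_weight s a.
Proof. by []. Qed.

Lemma cycle_weight_transversal m (s : 'S_m) a (Q : pred 'I_m) :
  cycle_transversal s Q -> cycle_weight s a = \prod_(i | Q i) tau (cp s a i).
Proof.
move=> tQ; apply: prod_transversal_eq tQ => [x e|]; first exact: tau_cycle_prod_iter.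
exact: cycle_rep_transversal.
Qed.

End CycleProducts.

(* A permutation of 'I_m.+1 is
   uniquely of the form  (s' fixing l) * tperm l z : for z = l the point l is a
   fixed point, for z = lift l y it is inserted in front of lift l y in the
   cycle of y (and the sign flips). *)
Section Expansion.
Variables (k : fieldType) (T : Type) (mul : T -> T -> T) (tau : T -> k).
Hypothesis mulA : associative mul.
Hypothesis tauC : forall x y, tau (mul x y) = tau (mul y x).
Local Notation cp := (cycle_prod mul).
Local Notation weight := (cycle_weight mul tau).

Definition merge_slot m (l : 'I_m.+1) (y : 'I_m) (a : 'I_m.+1 -> T) (j : 'I_m) : T :=
  if j == y then mul (a l) (a (lift l j)) else a (lift l j).

Variables (m : nat) (l : 'I_m.+1) (s' : 'S_m).
Local Notation s_fix := (lift_perm l l s').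

Lemma fix_iter_lift e j : (s_fix ^+ e)%g (lift l j) = lift l ((s' ^+ e)%g j).
Proof. by elim: e => [|e IH]; rewrite ?permX0 // !permXS IH lift_perm_lift. Qed.

Lemma fix_iter_l e : (s_fix ^+ e)%g l = l.
Proof. by elim: e => [|e IH]; rewrite ?permX0 // permXS IH lift_perm_id. Qed.

(* The cycles of s_fix are {l} and the lifts of the cycles of s'. *)
Definition rep_fix (z : 'I_m.+1) : bool :=
  if unlift l z is Some j then cycle_rep s' j else true.

Lemma fix_transversal : cycle_transversal s_fix rep_fix.
Proof.
have [meet uniq_rep] := cycle_rep_transversal s'.
split=> [x|z z' Qz /[swap] /porbitP [e ->]].
  case: (unliftP l x) => [j ->|->]; last by exists l; rewrite /rep_fix ?porbit_id ?unlift_none.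
  have [_ /porbitP [e ->] rep_j] := meet j.
  by exists (lift l ((s' ^+ e)%g j)); rewrite /rep_fix ?liftK // -fix_iter_lift mem_porbit.
case: (unliftP l z) Qz => [j ->|->]; last by rewrite fix_iter_l.
rewrite /rep_fix fix_iter_lift !liftK => rep_j rep_j'.
by rewrite (uniq_rep j _ rep_j rep_j' (mem_porbit _ _ _)).
Qed.

Lemma cycle_weight_fix (a : 'I_m.+1 -> T) :
  (weight s_fix a = tau (a l) * weight s' (fun j => a (lift l j)))%R.
Proof.
rewrite (cycle_weight_transversal mulA tauC a fix_transversal).
rewrite (bigD1_ord l) /rep_fix ?unlift_none //.
congr (_ * _)%R.
  rewrite /cycle_prod (@porbit_size_eq _ _ _ 1) // ?fix_iter_l //.
  by case=> [|[]].
apply: eq_big => j; first by rewrite liftK.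
move=> _; congr (tau _).
by apply: (cycle_prod_transport _ (@lift_inj _ l)) => // e; rewrite fix_iter_lift.
Qed.

Variable y : 'I_m.
Local Notation s_ins := (s_fix * tperm l (lift l y))%g.
Local Notation r := #|porbit s' y|.

Lemma ins_l : s_ins l = lift l y.
Proof. by rewrite permM lift_perm_id tpermL. Qed.

Lemma ins_lift w : s' w != y -> s_ins (lift l w) = lift l (s' w).
Proof.
move=> sw_y; rewrite permM lift_perm_lift tpermD ?neq_lift //.
by rewrite (inj_eq lift_inj) eq_sym.
Qed.

Lemma ins_lift_pred w : s' w = y -> s_ins (lift l w) = l.
Proof. by move=> <-; rewrite permM lift_perm_lift tpermR. Qed.

Lemma ins_iter_out j e : j \notin porbit s' y ->
  (s_ins ^+ e)%g (lift l j) = lift l ((s' ^+ e)%g j).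
Proof.
move=> j_out; elim: e => [|e IH]; rewrite ?permX0 // [LHS]permXS IH ins_lift -?permXS //.
by apply: contraNneq j_out => <-; rewrite porbit_sym mem_porbit.
Qed.

Lemma ins_iter_in e : e < r -> (s_ins ^+ e.+1)%g l = lift l ((s' ^+ e)%g y).
Proof.
elim: e => [|e IH] e_lt; first by rewrite permX0 expg1 ins_l.
rewrite [LHS]permXS IH ?(ltn_trans _ e_lt) // ins_lift -?permXS //.
by rewrite porbit_iter_neq.
Qed.

Lemma ins_porbit_size_l : #|porbit s_ins l| = r.+1.
Proof.
apply: porbit_size_eq => // [|[|e] //= e_lt]; last first.
  by rewrite ins_iter_in // eq_sym neq_lift.
move: (porbit_size_gt0 s' y) (@ins_iter_in r.-1) (porbit_size_ret s' y).
case: r => // r' _ iter_in ret.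
by rewrite permXS iter_in // ins_lift_pred // -permXS.
Qed.

Lemma cycle_prod_ins_l a : cp s_ins a l = cp s' (merge_slot l y a) y.
Proof.
rewrite /cycle_prod ins_porbit_size_l /=.
move: (porbit_size_gt0 s' y) (@ins_iter_in) (@porbit_iter_neq _ s' y).
case: r => // r' _ iter_in iter_neq /=.
rewrite expg1 ins_l /merge_slot eqxx.
have -> : iota 2 r' = map S (iota 1 r') by rewrite -(iotaDl 1).
rewrite foldl_map; apply: (@eq_foldl_in _ _ (fun e => 0 < e < r'.+1)).
  move=> acc e /andP [e_gt0 e_lt]; rewrite iter_in // ifN //.
  by apply: iter_neq; rewrite e_gt0.
by apply/allP => e; rewrite mem_iota add1n => /andP [->].
Qed.

Definition in_ins_cycle (z : 'I_m.+1) : bool :=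
  if unlift l z is Some j then j \in porbit s' y else true.

Lemma in_ins_cycle_iter z e : in_ins_cycle z -> in_ins_cycle ((s_ins ^+ e)%g z).
Proof.
elim: e => [|e IH] zP; rewrite ?permX0 // permXS; move: {IH zP}(IH zP).
rewrite /in_ins_cycle; case: (unliftP l) => [w ->|->]; last by rewrite ins_l liftK porbit_id.
move=> wy; case: (eqVneq (s' w) y) => [/ins_lift_pred ->|/ins_lift ->].
  by rewrite unlift_none.
by rewrite liftK -(porbit_eq wy) -{1}(expg1 s') mem_porbit.
Qed.

Lemma lift_in_ins_cycle w : w \in porbit s' y -> lift l w \in porbit s_ins l.
Proof. by case/porbit_iter_lt => e e_lt ->; rewrite -ins_iter_in // mem_porbit. Qed.

(* The cycles of s_ins are the lifts of the cycles of s', with l added to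
   that of y; so the lifted representatives are a transversal. *)
Definition rep_ins (z : 'I_m.+1) : bool :=
  if unlift l z is Some j then cycle_rep s' j else false.

Lemma ins_transversal : cycle_transversal s_ins rep_ins.
Proof.
have [meet uniq_rep] := cycle_rep_transversal s'.
split=> [x|z z' Qz /[swap] /porbitP [e ->]].
  have meet_l : exists2 j, j \in porbit s_ins l & rep_ins j.
    have [j0 j0y rep_j0] := meet y.
    by exists (lift l j0); rewrite /rep_ins ?liftK ?lift_in_ins_cycle.
  case: (unliftP l x) => [w ->|->] //.
  have [wy|w_out] := boolP (w \in porbit s' y).
    by rewrite (porbit_eq (lift_in_ins_cycle wy)).
  have [_ /porbitP [e ->] rep_j] := meet w.
  by exists (lift l ((s' ^+ e)%g w)); rewrite /rep_ins ?liftK // -ins_iter_out // mem_porbit.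
move: Qz; rewrite /rep_ins; case: (unliftP l z) => [j ->|->] // rep_j.
have [jy|j_out] := boolP (j \in porbit s' y); last first.
  rewrite ins_iter_out // liftK => rep_j'.
  by rewrite (uniq_rep j _ rep_j rep_j' (mem_porbit _ _ _)).
have : in_ins_cycle ((s_ins ^+ e)%g (lift l j)).
  by apply: in_ins_cycle_iter; rewrite /in_ins_cycle liftK.
rewrite /in_ins_cycle; case: (unliftP l) => [j' ->|-> //] j'y rep_j'.
by rewrite (uniq_rep j j' rep_j rep_j') // (porbit_eq jy).
Qed.

Lemma cycle_weight_ins a : weight s_ins a = weight s' (merge_slot l y a).
Proof.
rewrite (cycle_weight_transversal mulA tauC a ins_transversal) big_mkcond.
rewrite (bigD1_ord l) // /rep_ins unlift_none Monoid.mul1m /cycle_weight [RHS]big_mkcond.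
apply: eq_bigr => j _; rewrite liftK; case: ifP => // _.
have [jy|j_out] := boolP (j \in porbit s' y).
  case/porbit_iter_lt: jy => e e_lt ->.
  by rewrite -ins_iter_in // !tau_cycle_prod_iter // cycle_prod_ins_l.
congr (tau _); transitivity (cp s' (fun j => a (lift l j)) j).
  by apply: (cycle_prod_transport _ (@lift_inj _ l)) => // e; rewrite ins_iter_out.
apply: cycle_prod_eq_on => e; rewrite /merge_slot ifN //.
by apply: contra j_out => /eqP <-; rewrite porbit_sym mem_porbit.
Qed.

Lemma odd_ins : odd_perm s_ins = ~~ odd_perm s'.
Proof.
by rewrite odd_permM odd_lift_perm odd_tperm addbb /= neq_lift; case: (odd_perm s').
Qed.

End Expansion.

Section ExpansionFormula.
Variables (k : fieldType) (T : Type) (mul : T -> T -> T) (tau : T -> k).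
Hypothesis mulA : associative mul.
Hypothesis tauC : forall x y, tau (mul x y) = tau (mul y x).
Local Open Scope ring_scope.

Lemma fix_ins_bij m (l : 'I_m.+1) :
  bijective (fun p : 'S_m * 'I_m.+1 => (lift_perm l l p.1 * tperm l p.2)%g).
Proof.
apply: inj_card_bij; last by rewrite card_prod !card_Sn card_ord factS mulnC.
move=> [s1 z1] [s2 z2] /= E.
have Ez : z1 = z2.
  by have := congr1 (fun s : 'S_m.+1 => s l) E; rewrite /= !permM !lift_perm_id !tpermL.
subst z2; move/mulIg: E => E; congr (_, _).
by apply/permP => j; apply: (@lift_inj _ l); rewrite -!(lift_perm_lift l l) E.
Qed.

Lemma Spc_expand m (a : 'I_m.+1 -> T) (l : 'I_m.+1) :
  Spc mul tau a = tau (a l) * Spc mul tau (fun j => a (lift l j))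
                  - \sum_(y < m) Spc mul tau (merge_slot mul l y a).
Proof.
(* reindex by the pairs (s', z); z = l is the fixed case, z = lift l y the insertions *)
rewrite SpcE (reindex _ (onW_bij _ (fix_ins_bij l))) /=.
rewrite -(pair_bigA _ (fun s z => (-1) ^+ odd_perm (lift_perm l l s * tperm l z)%g *
   cycle_weight mul tau (lift_perm l l s * tperm l z)%g a)) /=.
under eq_bigr => s _ do rewrite (bigD1_ord l) //= tperm1 mulg1.
rewrite big_split /= SpcE mulr_sumr -sumrN exchange_big /=; congr (_ + _).
  apply: eq_bigr => s _.
  by rewrite cycle_weight_fix // odd_lift_perm !addbb /= mulrCA.
apply: eq_bigr => y _; rewrite SpcE -sumrN; apply: eq_bigr => s _.
rewrite cycle_weight_ins // odd_ins.
by case: (odd_perm s); rewrite /= ?expr0 ?expr1 ?mulN1r ?mul1r ?opprK.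
Qed.

End ExpansionFormula.

Section Degree.
Variables (k : fieldType) (T : Type) (mul : T -> T -> T) (tau : T -> k).
Hypothesis mulA : associative mul.
Hypothesis tauC : forall x y, tau (mul x y) = tau (mul y x).
Local Open Scope ring_scope.

Lemma Svanishes_mono d e : (d <= e)%N -> Svanishes mul tau d.+1 -> Svanishes mul tau e.+1.
Proof.
move=> le_de vanish_d; elim: e le_de => [|e IH]; first by rewrite leqn0 => /eqP <-.
rewrite leq_eqVlt => /orP [/eqP <- //|lt_de] a.
rewrite (Spc_expand mulA tauC a ord_max) IH // mulr0 sub0r big1 ?oppr0 // => y _.
exact: IH.
Qed.

Lemma Spc0 (a : 'I_0 -> T) : Spc mul tau a = 1.
Proof.
rewrite SpcE (big_pred1 1%g) => [|s]; last by rewrite /= permS0 eqxx.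
by rewrite odd_perm1 expr0 mul1r /cycle_weight big_ord0.
Qed.

Variable one : T.
Hypothesis mul1x : left_id one mul.

Definition snoc_one m (a : 'I_m -> T) (j : 'I_m.+1) : T :=
  if unlift ord_max j is Some j' then a j' else one.

Lemma Spc_snoc_one m (a : 'I_m -> T) :
  Spc mul tau (snoc_one a) = (tau one - m%:R) * Spc mul tau a.
Proof.
rewrite (Spc_expand mulA tauC _ ord_max) /snoc_one unlift_none.
have drop_last : (fun j => if unlift ord_max (lift ord_max j) is Some j' then a j'
                           else one) = a.
  by apply: funext => j; rewrite liftK.
have merge_last y : merge_slot mul ord_max y (snoc_one a) = a.
  apply: funext => j; rewrite /merge_slot /snoc_one liftK unlift_none.
  by case: ifP.
under eq_bigr => y _ do rewrite merge_last.
by rewrite drop_last sumr_const card_ord mulrBl mulr_natl.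
Qed.

Lemma Spc_ones m : Spc mul tau (fun _ : 'I_m => one) = \prod_(i < m) (tau one - i%:R).
Proof.
elim: m => [|m IH]; first by rewrite Spc0 big_ord0.
have -> : (fun _ : 'I_m.+1 => one) = snoc_one (fun _ : 'I_m => one).
  by apply: funext => j; rewrite /snoc_one; case: unlift.
by rewrite Spc_snoc_one IH big_ord_recr /= mulrC.
Qed.

Hypothesis char0 : [pchar k] =i pred0.

Lemma natr_inj_char0 (i j : nat) : (i%:R : k) = j%:R -> i = j.
Proof.
wlog le_ij : i j / (i <= j)%N => [sym|ij].
  by case: (leqP i j) => [|/ltnW] h E; [apply: sym | symmetry; apply: sym].
have : ((j - i)%N%:R : k) == 0 by rewrite natrB // ij subrr.
rewrite (pcharf0P _).1 // subn_eq0 => le_ji; apply/eqP; by rewrite eqn_leq le_ij le_ji.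
Qed.

Lemma Svanishes_descend i e : tau one = i%:R -> (i <= e)%N ->
  Svanishes mul tau e.+1 -> Svanishes mul tau i.+1.
Proof.
move=> tau1 le_ie; elim: e le_ie => [|e IH]; first by rewrite leqn0 => /eqP ->.
rewrite leq_eqVlt => /orP [/eqP -> //|lt_ie] vanish a.
apply: (IH lt_ie) a => b; apply/eqP; have := vanish (snoc_one b).
rewrite Spc_snoc_one => /eqP; rewrite mulf_eq0 subr_eq0 tau1 => /orP [/eqP|//].
by move/natr_inj_char0 => E; rewrite E ltnn in lt_ie.
Qed.

Lemma degree_trace_one d : is_degree mul tau d -> tau one = d%:R.
Proof.
case=> vanish_d min_d.
have /eqP := vanish_d (fun _ => one); rewrite Spc_ones => /prodf_eq0 [i _].
rewrite subr_eq0 => /eqP tau1; have le_id : (i <= d)%N by rewrite -ltnS.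
case: (ltnP i d) => [lt_id|ge_id].
  by case: (min_d i lt_id); apply: Svanishes_descend tau1 (ltnW lt_id) vanish_d.
by rewrite tau1 (@anti_leq i d) // le_id ge_id.
Qed.

Lemma is_degree_trace_one d :
  tau one = d%:R -> Svanishes mul tau d.+1 -> is_degree mul tau d.
Proof.
move=> tau1 vanish_d; split=> // e lt_ed /(_ (fun _ => one)) /eqP.
rewrite Spc_ones tau1; apply/negP/prodf_neq0 => i _; rewrite subr_eq0.
apply/eqP => /natr_inj_char0 E.
by move: lt_ed; rewrite E ltnNge -ltnS ltn_ord.
Qed.

End Degree.

Section Multilinearity.
Variables (k : fieldType) (T : Type) (mul : T -> T -> T) (tau : T -> k).
Variables (add : T -> T -> T) (zero : T).
Hypothesis mulA : associative mul.
Hypothesis tauC : forall x y, tau (mul x y) = tau (mul y x).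
Hypothesis mulDl : left_distributive mul add.
Hypothesis tauD : forall x y, tau (add x y) = (tau x + tau y)%R.
Hypothesis add00 : add zero zero = zero.
Local Open Scope ring_scope.

Definition set_slot m (a : 'I_m -> T) (l : 'I_m) (v : T) (j : 'I_m) : T :=
  if j == l then v else a j.

Definition rep_at m (s : 'S_m) (l j : 'I_m) : bool :=
  if l \in porbit s j then j == l else cycle_rep s j.

Lemma rep_at_transversal m (s : 'S_m) l : cycle_transversal s (rep_at s l).
Proof.
have [meet uniq_rep] := cycle_rep_transversal s.
split=> [x|z z' Qz Qz' zz'].
  have [lx|l_out] := boolP (l \in porbit s x).
    by exists l; rewrite // /rep_at porbit_id eqxx.
  have [j jx rep_j] := meet x.
  by exists j; rewrite // /rep_at (porbit_eq jx) (negbTE l_out).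
move: Qz Qz'; rewrite /rep_at (porbit_eq zz').
case: (l \in porbit s z) => [/eqP -> /eqP -> //|rep_z rep_z'].
exact: uniq_rep rep_z rep_z' zz'.
Qed.

Lemma foldl_addl (g : nat -> T) x y l :
  foldl (fun acc e => mul acc (g e)) (add x y) l =
  add (foldl (fun acc e => mul acc (g e)) x l) (foldl (fun acc e => mul acc (g e)) y l).
Proof. by elim: l x y => //= e l IH x y; rewrite mulDl IH. Qed.

Lemma cycle_prod_set_slot m (s : 'S_m) a l v :
  cycle_prod mul s (set_slot a l v) l =
  foldl (fun acc e => mul acc (a ((s ^+ e)%g l))) v (iota 1 #|porbit s l|.-1).
Proof.
rewrite /cycle_prod /set_slot eqxx.
apply: (@eq_foldl_in _ _ (fun e => 0 < e < #|porbit s l|)%N).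
  by move=> acc e e_bd; rewrite ifN // porbit_iter_neq.
by apply/allP => e; rewrite mem_iota add1n prednK ?porbit_size_gt0.
Qed.

Lemma cycle_weight_set_slot m (s : 'S_m) a l v :
  cycle_weight mul tau s (set_slot a l v) =
  tau (cycle_prod mul s (set_slot a l v) l) *
  \prod_(j | rep_at s l j && (j != l)) tau (cycle_prod mul s a j).
Proof.
rewrite (cycle_weight_transversal mulA tauC _ (rep_at_transversal s l)).
rewrite (bigD1 l) /rep_at ?porbit_id //; congr (_ * _).
apply: eq_bigr => j /andP [rep_j jl]; congr (tau _).
apply: cycle_prod_eq_on => e; rewrite /set_slot ifN //.
move: rep_j; case: ifP => [_ /eqP E|l_out _]; first by rewrite E eqxx in jl.
by apply: contraFN l_out => /eqP <-; rewrite mem_porbit.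
Qed.

Lemma Spc_set_slotD m (a : 'I_m -> T) l x y :
  Spc mul tau (set_slot a l (add x y)) =
  Spc mul tau (set_slot a l x) + Spc mul tau (set_slot a l y).
Proof.
rewrite !SpcE -big_split; apply: eq_bigr => s _ /=.
by rewrite -mulrDr !cycle_weight_set_slot !cycle_prod_set_slot foldl_addl tauD mulrDl.
Qed.

Lemma Spc_set_slot0 m (a : 'I_m -> T) l : Spc mul tau (set_slot a l zero) = 0.
Proof.
apply: (addrI (Spc mul tau (set_slot a l zero))).
by rewrite -Spc_set_slotD add00 addr0.
Qed.

Variables (P : T -> Prop) (I : finType) (proj : I -> T -> T).
Hypothesis proj_sum : forall x, x = \big[add/zero]_(i : I) proj i x.
Hypothesis proj_P : forall i x, P (proj i x).

Lemma Spc_vanish_span m :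
  (forall a : 'I_m -> T, (forall j, P (a j)) -> Spc mul tau a = 0) ->
  forall a : 'I_m -> T, Spc mul tau a = 0.
Proof.
move=> vanish_P.
(* induction on p: slots of index >= p already hold elements of P *)
suff vanish_from p : forall b : 'I_m -> T, (forall j : 'I_m, (p <= j)%N -> P (b j)) ->
    Spc mul tau b = 0.
  by move=> a; apply: (vanish_from m) => j; rewrite leqNgt ltn_ord.
elim: p => [|p IH] b Pb; first by apply: vanish_P => j; exact: Pb.
have [p_lt|p_ge] := ltnP p m; last first.
  by apply: IH => j le_pj; have := leq_trans p_ge le_pj; rewrite leqNgt ltn_ord.
pose l := Ordinal p_lt.
have -> : b = set_slot b l (b l) by apply: funext => j; rewrite /set_slot; case: eqP => // ->.
rewrite (proj_sum (b l)) (big_morph (fun v => Spc mul tau (set_slot b l v))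
  (Spc_set_slotD b l) (Spc_set_slot0 b l)).
apply: big1 => i _; apply: IH => j le_pj; rewrite /set_slot.
case: (eqVneq j l) => [_|jl]; first exact: proj_P.
apply: Pb; rewrite ltn_neqAle le_pj andbT.
by apply: contra jl => /eqP pj; apply/eqP/val_inj; rewrite /= -pj.
Qed.

End Multilinearity.

Section Transport.
Variables (k : fieldType) (T T' : Type) (mul : T -> T -> T) (tau : T -> k).
Variables (mul' : T' -> T' -> T') (tau' : T' -> k) (phi : T -> T') (P : T -> Prop).
Hypothesis P_mul : forall x y, P x -> P y -> P (mul x y).
Hypothesis phi_mul : forall x y, P x -> P y -> phi (mul x y) = mul' (phi x) (phi y).
Hypothesis phi_tau : forall x, P x -> tau' (phi x) = tau x.

Lemma foldl_phi (g : nat -> T) x l : P x -> (forall e, P (g e)) ->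
  P (foldl (fun acc e => mul acc (g e)) x l) /\
  phi (foldl (fun acc e => mul acc (g e)) x l) =
    foldl (fun acc e => mul' acc (phi (g e))) (phi x) l.
Proof.
move=> Px Pg; elim: l x Px => //= e l IH x Px.
have [P_fold phi_fold] := IH _ (P_mul Px (Pg e)).
by rewrite phi_fold phi_mul.
Qed.

Lemma Spc_transport m (a : 'I_m -> T) : (forall j, P (a j)) ->
  Spc mul' tau' (fun j => phi (a j)) = Spc mul tau a.
Proof.
move=> Pa; rewrite !SpcE; apply: eq_bigr => s _; congr (_ * _)%R.
apply: eq_bigr => i _; rewrite /cycle_prod.
have [P_fold phi_fold] := foldl_phi (iota 1 #|porbit s i|.-1) (Pa i) (fun e => Pa ((s ^+ e)%g i)).
by rewrite -phi_fold phi_tau.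
Qed.

End Transport.

Section LinearizedHom.
Variables (k : fieldType) (n : nat) (C : fincat n).
Local Notation kH := (kHom k C).
Local Open Scope ring_scope.

Definition linext (i j : 'I_n) (f : kH i j) (h : Mor C i j -> k) : k :=
  \sum_(a <- finsupp f) f a * h a.

Lemma linext_incl i j (f : kH i j) h (S : {fset {classic (Mor C i j)}}) :
  (finsupp f `<=` S)%fset -> linext f h = \sum_(a <- S) f a * h a.
Proof. by move=> sub; apply: big_fset_incl => // x _ nx; rewrite fsfun_dflt // mul0r. Qed.

Lemma linext_ext i j (f : kH i j) h1 h2 : (forall a, h1 a = h2 a) -> linext f h1 = linext f h2.
Proof. by move=> h12; apply: eq_bigr => a _; rewrite h12. Qed.

Lemma linext_eq0 i j (f : kH i j) h : (forall a, f a = 0) -> linext f h = 0.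
Proof. by move=> f0; rewrite /linext big1 // => a _; rewrite f0 mul0r. Qed.

Lemma kaddE i j (f g : kH i j) c : kadd f g c = f c + g c.
Proof.
rewrite /kadd fsfunE; case: ifP => // /negbT; rewrite in_fsetU negb_or.
by case/andP => /fsfun_dflt -> /fsfun_dflt ->; rewrite addr0.
Qed.

Lemma kzeroE i j c : kzero k C i j c = 0.
Proof. by rewrite /kzero fsfunE. Qed.

Lemma linext_kadd i j (f g : kH i j) h : linext (kadd f g) h = linext f h + linext g h.
Proof.
have supp_add : (finsupp (kadd f g) `<=` finsupp f `|` finsupp g)%fset.
  apply/fsubsetP => c; rewrite mem_finsupp kaddE in_fsetU !mem_finsupp.
  by apply: contraR; rewrite negb_or !negbK => /andP [/eqP -> /eqP ->]; rewrite addr0.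
rewrite (linext_incl _ supp_add) (linext_incl _ (fsubsetUl _ (finsupp g))).
rewrite (linext_incl _ (fsubsetUr (finsupp f) _)) -big_split.
by apply: eq_bigr => c _; rewrite kaddE mulrDl.
Qed.

Lemma linext_big i j I (r : seq I) (P : pred I) (F : I -> kH i j) h :
  linext (\big[@kadd _ _ C i j / kzero k C i j]_(x <- r | P x) F x) h =
  \sum_(x <- r | P x) linext (F x) h.
Proof.
apply: (big_morph (fun f => linext f h)) => [f g|]; first exact: linext_kadd.
by apply: linext_eq0 => a; rewrite kzeroE.
Qed.

Lemma kadd_big_eval i j I (r : seq I) (P : pred I) (F : I -> kH i j) c :
  (\big[@kadd _ _ C i j / kzero k C i j]_(x <- r | P x) F x) c = \sum_(x <- r | P x) F x c.
Proof. by apply: (big_morph (fun f : kH i j => f c)) => [f g|]; rewrite ?kaddE ?kzeroE. Qed.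

Lemma linext_sumr i j (f : kH i j) I (r : seq I) (P : pred I) (h : I -> Mor C i j -> k) :
  linext f (fun a => \sum_(x <- r | P x) h x a) = \sum_(x <- r | P x) linext f (h x).
Proof. by rewrite /linext exchange_big; apply: eq_bigr => a _; rewrite mulr_sumr. Qed.

Lemma linext_swap i j i' j' (f : kH i j) (g : kH i' j') F :
  linext f (fun a => linext g (F a)) = linext g (fun b => linext f (fun a => F a b)).
Proof.
rewrite /linext; under eq_bigr => a _ do rewrite big_distrr.
rewrite exchange_big; apply: eq_bigr => b _; rewrite big_distrr; apply: eq_bigr => a _ /=.
by rewrite !mulrA (mulrC (f a)).
Qed.

Lemma linext_delta i j (f : kH i j) (c : {classic (Mor C i j)}) :
  linext f (fun b => ((b : {classic (Mor C i j)}) == c)%:R) = f c.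
Proof.
rewrite /linext; case: (finsuppP f c) => [c_out|c_in].
  rewrite big1_seq // => a /andP [_ a_in]; case: eqP => [E|]; last by rewrite mulr0.
  by subst a; rewrite a_in in c_out.
rewrite (bigD1_seq c) ?fset_uniq //= eqxx mulr1 big1 ?addr0 // => a /negbTE ->.
by rewrite mulr0.
Qed.

Lemma kcompE i j l (f : kH j l) (g : kH i j) c :
  kcomp f g c = linext f (fun a => linext g (fun b =>
      ((Defs.comp C a b : {classic (Mor C i l)}) == c)%:R)).
Proof.
rewrite /kcomp fsfunE /linext; case: ifP => [_|c_out].
  apply: eq_bigr => a _; rewrite mulr_sumr; apply: eq_bigr => b _.
  by case: eqP; rewrite ?mulr1 ?mulr0.
symmetry; apply: big1_seq => a /andP [_ a_in]; rewrite big1_seq ?mulr0 //.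
move=> b /andP [_ b_in]; case: eqP; rewrite ?mulr0 // => E.
by move: c_out; rewrite -E; case/negP; apply/imfset2P; exists a => //; exists b.
Qed.

Lemma linext_kcomp i j l (f : kH j l) (g : kH i j) (h : Mor C i l -> k) :
  linext (kcomp f g) h = linext f (fun a => linext g (fun b => h (Defs.comp C a b))).
Proof.
pose S := ([fset (Defs.comp C a b : {classic (Mor C i l)})
           | a : {classic (Mor C j l)} in finsupp f,
             b : {classic (Mor C i j)} in finsupp g])%fset.
have supp_comp : (finsupp (kcomp f g) `<=` S)%fset.
  by apply/fsubsetP => c; rewrite mem_finsupp /kcomp fsfunE; case: ifP; rewrite ?eqxx.
rewrite (linext_incl _ supp_comp).
transitivity (\sum_(c <- S) \sum_(a <- finsupp f) \sum_(b <- finsupp g)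
   (f a * g b * (((Defs.comp C a b : {classic (Mor C i l)}) == c)%:R * h c))).
  apply: eq_bigr => c _; rewrite kcompE /linext big_distrl; apply: eq_bigr => a _ /=.
  rewrite -mulrA big_distrl big_distrr; apply: eq_bigr => b _ /=.
  by rewrite !mulrA.
rewrite exchange_big; apply: eq_big_seq => a a_in; rewrite exchange_big mulr_sumr.
apply: eq_big_seq => b b_in; rewrite -mulr_sumr -mulrA; congr (_ * (_ * _)).
rewrite (bigD1_seq (Defs.comp C a b : {classic (Mor C i l)})) ?fset_uniq //=; last first.
  by apply/imfset2P; exists a => //; exists b.
rewrite eqxx mul1r big1 ?addr0 // => c; rewrite eq_sym => /negbTE ->.
by rewrite mul0r.
Qed.

Lemma kcompA i j l q (f : kH l q) (g : kH j l) (h : kH i j) :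
  kcomp f (kcomp g h) = kcomp (kcomp f g) h.
Proof.
apply/fsfunP => c; rewrite !kcompE linext_kcomp.
apply: linext_ext => a; rewrite linext_kcomp; apply: linext_ext => b.
by apply: linext_ext => d; rewrite Defs.compA.
Qed.

Definition kid (i : 'I_n) : kH i i :=
  [fsfun c in [fset (Defs.idm C i : {classic (Mor C i i)})]%fset => (1 : k)].

Lemma linext_kid i h : linext (kid i) h = h (Defs.idm C i).
Proof.
have kidE c : kid i c = (c == (Defs.idm C i : {classic (Mor C i i)}))%:R.
  by rewrite /kid fsfunE in_fset1; case: ifP.
have supp_kid : (finsupp (kid i) `<=` [fset (Defs.idm C i : {classic (Mor C i i)})])%fset.
  by apply/fsubsetP => c; rewrite mem_finsupp kidE in_fset1; case: (c == _); rewrite ?eqxx.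
by rewrite (linext_incl _ supp_kid) big_seq_fset1 kidE eqxx mul1r.
Qed.

Lemma kcomp_idl i l (f : kH i l) : kcomp (kid l) f = f.
Proof.
apply/fsfunP => c; rewrite kcompE linext_kid -(linext_delta f c).
by apply: linext_ext => b; rewrite Defs.comp1m.
Qed.

Lemma alphaX_trace (alpha : forall i : 'I_n, Mor C i i -> k) :
  loop_fun alpha ->
  forall i j (f : kH j i) (g : kH i j), alphaX alpha (kcomp f g) = alphaX alpha (kcomp g f).
Proof.
move=> loop_alpha i j f g; rewrite /alphaX -!/(linext _ _) !linext_kcomp linext_swap.
by apply: linext_ext => b; apply: linext_ext => a; apply: loop_alpha.
Qed.

Lemma kcomp_kaddl i j l (f f' : kH j l) (g : kH i j) c :
  kcomp (kadd f f') g c = kcomp f g c + kcomp f' g c.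
Proof. by rewrite !kcompE linext_kadd. Qed.

Lemma kcomp_bigl i j l I (r : seq I) (P : pred I) (F : I -> kH j l) (g : kH i j) c :
  kcomp (\big[@kadd _ _ C j l / kzero k C j l]_(x <- r | P x) F x) g c =
  \sum_(x <- r | P x) kcomp (F x) g c.
Proof. by rewrite kcompE linext_big; apply: eq_bigr => x _; rewrite kcompE. Qed.

Lemma kcomp_bigr i j l I (r : seq I) (P : pred I) (f : kH j l) (F : I -> kH i j) c :
  kcomp f (\big[@kadd _ _ C i j / kzero k C i j]_(x <- r | P x) F x) c =
  \sum_(x <- r | P x) kcomp f (F x) c.
Proof.
rewrite kcompE (linext_ext _ (fun a => linext_big _ _ _ _)) linext_sumr.
by apply: eq_bigr => x _; rewrite kcompE.
Qed.

Lemma kcomp_eq0l i j l (f : kH j l) (g : kH i j) c : (forall a, f a = 0) -> kcomp f g c = 0.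
Proof. by move=> f0; rewrite kcompE linext_eq0. Qed.

Lemma kcomp_eq0r i j l (f : kH j l) (g : kH i j) c : (forall b, g b = 0) -> kcomp f g c = 0.
Proof.
move=> g0; rewrite kcompE (linext_ext _ (fun a => linext_eq0 _ g0)).
by rewrite /linext big1 // => a _; rewrite mulr0.
Qed.

End LinearizedHom.

Section MatrixAlgebra.
Variables (k : fieldType) (n : nat) (C : fincat n).
Variable alpha : forall i : 'I_n, Mor C i i -> k.
Local Notation kH := (kHom k C).
Local Notation AM := (Amat k C).
Local Open Scope ring_scope.

Lemma AmatP (x y : AM) : (forall i j c, x i j c = y i j c) -> x = y.
Proof.
move=> xy; apply: functional_extensionality_dep => i.
by apply: functional_extensionality_dep => j; apply/fsfunP => c; apply: xy.
Qed.

Lemma AmulE (x y : AM) i j c : Amul x y i j c = \sum_(l < n) kcomp (x i l) (y l j) c.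
Proof. exact: kadd_big_eval. Qed.

Definition Aadd (x y : AM) : AM := fun i j => kadd (x i j) (y i j).
Definition Azero : AM := fun i j => kzero k C j i.

Definition Aone : AM := fun i j =>
  match j =P i with
  | ReflectT e => eq_rect j (fun z => kH j z) (kid k C j) i e
  | ReflectF _ => kzero k C j i
  end.

Lemma Aone_diag i : Aone i i = kid k C i.
Proof. by rewrite /Aone; case: eqP => // e; rewrite (eq_axiomK e). Qed.

Lemma Aone_offdiag i j : j != i -> Aone i j = kzero k C j i.
Proof. by rewrite /Aone; case: eqP. Qed.

Lemma Amul1 (x : AM) : Amul Aone x = x.
Proof.
apply: AmatP => i j c; rewrite AmulE (bigD1 i) //= Aone_diag kcomp_idl big1 ?addr0 //.
by move=> l li; rewrite Aone_offdiag //; apply: kcomp_eq0l => a; rewrite kzeroE.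
Qed.

Lemma AmulA (x y z : AM) : Amul x (Amul y z) = Amul (Amul x y) z.
Proof.
apply: AmatP => i j c; rewrite !AmulE.
under eq_bigr => l _ do rewrite kcomp_bigr.
under [RHS]eq_bigr => l _ do rewrite kcomp_bigl.
by rewrite exchange_big; apply: eq_bigr => l _; apply: eq_bigr => l' _; rewrite kcompA.
Qed.

Lemma Amul_addl (x y z : AM) : Amul (Aadd x y) z = Aadd (Amul x z) (Amul y z).
Proof.
apply: AmatP => i j c; rewrite /Aadd kaddE !AmulE -big_split.
by apply: eq_bigr => l _; rewrite kcomp_kaddl.
Qed.

Lemma Aadd00 : Aadd Azero Azero = Azero.
Proof. by apply: AmatP => i j c; rewrite /Aadd kaddE /Azero kzeroE addr0. Qed.

Lemma Atau_one : Atau alpha Aone = \sum_(i < n) alpha (Defs.idm C i).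
Proof. by apply: eq_bigr => i _; rewrite Aone_diag; apply: linext_kid. Qed.

Lemma Atau_add (x y : AM) : Atau alpha (Aadd x y) = Atau alpha x + Atau alpha y.
Proof. by rewrite /Atau -big_split; apply: eq_bigr => i _; apply: linext_kadd. Qed.

Lemma Atau_trace : loop_fun alpha -> forall x y : AM, Atau alpha (Amul x y) = Atau alpha (Amul y x).
Proof.
move=> loop_alpha x y; rewrite /Atau /Amul.
under eq_bigr => i _ do rewrite /alphaX -/(linext _ _) linext_big.
under [RHS]eq_bigr => i _ do rewrite /alphaX -/(linext _ _) linext_big.
rewrite [RHS]exchange_big; apply: eq_bigr => i _; apply: eq_bigr => l _.
exact: alphaX_trace.
Qed.

Definition supported (t s : 'I_n) (x : AM) : Prop :=
  forall i j c, ~~ ((i == t) && (j == s)) -> x i j c = 0.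

Lemma supported_mul t s s' u (x y : AM) :
  supported t s x -> supported s' u y -> supported t u (Amul x y).
Proof.
move=> x_ts y_s'u i j c not_tu; rewrite AmulE big1 // => l _.
have [it|it] := eqVneq i t.
  apply: kcomp_eq0r => b; apply: y_s'u; apply: contra not_tu.
  by case/andP => _ ->; rewrite it eqxx.
by apply: kcomp_eq0l => a; apply: x_ts; rewrite (negbTE it).
Qed.

Lemma Atau_supported_offdiag t s (x : AM) : supported t s x -> t != s -> Atau alpha x = 0.
Proof.
move=> x_ts ts; rewrite /Atau big1 // => i _; apply: linext_eq0 => b.
by apply: x_ts; case: (i =P t) => //= ->.
Qed.

Lemma Atau_supported_diag c (x : AM) : supported c c x -> Atau alpha x = alphaX alpha (x c c).
Proof.
move=> x_cc; rewrite /Atau (bigD1 c) //= big1 ?addr0 // => i ic.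
by apply: linext_eq0 => b; apply: x_cc; rewrite (negbTE ic).
Qed.

Lemma Amul_supported_diag c (x y : AM) : supported c c x -> supported c c y ->
  Amul x y c c = kcomp (x c c) (y c c).
Proof.
move=> x_cc y_cc; apply/fsfunP => d; rewrite AmulE (bigD1 c) //= big1 ?addr0 //.
by move=> l lc; apply: kcomp_eq0l => a; apply: x_cc; rewrite eqxx (negbTE lc).
Qed.

Definition entry_part (t s : 'I_n) (x : AM) : AM :=
  fun i j => if (i == t) && (j == s) then x i j else kzero k C j i.

Lemma entry_part_supported t s x : supported t s (entry_part t s x).
Proof. by move=> i j c ij; rewrite /entry_part (negbTE ij) kzeroE. Qed.

Lemma sum_entry_parts (x : AM) :
  x = \big[Aadd/Azero]_(p : 'I_n * 'I_n) entry_part p.1 p.2 x.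
Proof.
have eval_big (F : 'I_n * 'I_n -> AM) i j c :
    (\big[Aadd/Azero]_p F p) i j c = \sum_p F p i j c.
  by apply: (big_morph (fun x : AM => x i j c)) => [x' y'|]; rewrite ?kaddE ?kzeroE.
apply: AmatP => i j c; rewrite eval_big (bigD1 (i, j)) //= /entry_part !eqxx /=.
rewrite big1 ?addr0 // => -[a b] /= ab_ij.
case: ifP => [/andP [/eqP ia /eqP jb]|_]; last exact: kzeroE.
by rewrite ia jb eqxx in ab_ij.
Qed.

End MatrixAlgebra.

Section Vanishing.
Variables (k : fieldType) (n : nat) (C : fincat n).
Variable alpha : forall i : 'I_n, Mor C i i -> k.
Hypothesis loop_alpha : loop_fun alpha.
Local Notation AM := (Amat k C).
Local Notation SA := (Spc (@Amul k n C) (Atau alpha)).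
Local Notation SEnd c := (Spc (fun f g : kHom k C c c => kcomp f g) (@alphaX k n C alpha c)).
Local Open Scope ring_scope.

Let mulA := @AmulA k n C.
Let tauC := Atau_trace loop_alpha.

Lemma kEnd_assoc c : associative (fun f g : kHom k C c c => kcomp f g).
Proof. by move=> f g h; apply: kcompA. Qed.

Lemma kEnd_trace c (f g : kHom k C c c) :
  alphaX alpha (kcomp f g) = alphaX alpha (kcomp g f).
Proof. exact: alphaX_trace. Qed.

Lemma degree_kEnd c d : [pchar k] =i pred0 -> deg_alpha_is alpha c d ->
  alpha (Defs.idm C c) = d%:R.
Proof.
move=> char0 deg_d; rewrite -(degree_trace_one (@kEnd_assoc c) (@kEnd_trace c)
  (@kcomp_idl k n C c c) char0 deg_d).
by rewrite /alphaX -/(linext _ _) linext_kid.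
Qed.

Lemma merge_slot_supported m (a : 'I_m.+1 -> AM) (t s : 'I_m.+1 -> 'I_n) l y :
  (forall j, supported (t j) (s j) (a j)) ->
  forall j, supported (if j == y then t l else t (lift l j)) (s (lift l j))
                      (merge_slot (@Amul k n C) l y a j).
Proof.
move=> a_ts j; rewrite /merge_slot; case: ifP => _; last exact: a_ts.
exact: supported_mul (a_ts l) (a_ts (lift l j)).
Qed.

Lemma Spc_column_offdiag m (a : 'I_m -> AM) (t s : 'I_m -> 'I_n) c :
  (forall j, supported (t j) (s j) (a j)) -> (forall j, s j = c) ->
  (exists l, t l != c) -> SA a = 0.
Proof.
elim: m a t s => [|m IH] a t s a_ts s_c [l t_l]; first by case: l t_l.
rewrite (Spc_expand mulA tauC a l).
rewrite (Atau_supported_offdiag alpha (a_ts l)) ?s_c // mul0r sub0r big1 ?oppr0 // => y _.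
apply: (IH _ _ _ (merge_slot_supported (l := l) (y := y) a_ts)) => [j|]; first exact: s_c.
by exists y; rewrite eqxx.
Qed.

Lemma Spc_diag_block m c (a : 'I_m -> AM) : (forall j, supported c c (a j)) ->
  SA a = SEnd c (fun j => a j c c).
Proof.
move=> a_cc; symmetry.
apply: (@Spc_transport _ _ _ _ _ _ _ (fun x : AM => x c c) (supported c c)) => //.
- by move=> x y x_cc y_cc; exact: supported_mul x_cc y_cc.
- by move=> x y x_cc y_cc; rewrite Amul_supported_diag.
- by move=> x x_cc; rewrite (Atau_supported_diag alpha x_cc).
Qed.

Definition column_count m (s : 'I_m -> 'I_n) (c : 'I_n) : nat := (\sum_(j < m) (s j == c))%N.

Variable d : 'I_n -> nat.
Hypothesis vanish_d : forall c,
  Svanishes (fun f g : kHom k C c c => kcomp f g) (@alphaX k n C alpha c) (d c).+1.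

Lemma Spc_column_overflow m (a : 'I_m -> AM) (t s : 'I_m -> 'I_n) c :
  (forall j, supported (t j) (s j) (a j)) -> (d c < column_count s c)%N -> SA a = 0.
Proof.
elim: m a t s => [|m IH] a t s a_ts; first by rewrite /column_count big_ord0.
have [[l s_l]|all_c] := pselect (exists l, s l != c).
  (* expand along a slot outside column c; the count of c is unchanged *)
  rewrite /column_count (bigD1_ord l) //= (negbTE s_l) add0n => lt_d.
  rewrite (Spc_expand mulA tauC a l).
  rewrite (IH _ (fun j => t (lift l j)) _ (fun j => a_ts _) lt_d) mulr0 sub0r.
  rewrite big1 ?oppr0 // => y _.
  exact: (IH _ _ _ (merge_slot_supported (l := l) (y := y) a_ts) lt_d).
have s_c j : s j = c by apply/eqP; apply: contra_notT all_c => ?; exists j.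
have [off|all_cc] := pselect (exists l, t l != c).
  by move=> _; apply: Spc_column_offdiag a_ts s_c off.
have t_c j : t j = c by apply/eqP; apply: contra_notT all_cc => ?; exists j.
rewrite /column_count (eq_bigr (fun _ => 1%N)) => [|j _]; last by rewrite s_c eqxx.
rewrite sum1_card card_ord ltnS => le_dm.
rewrite (@Spc_diag_block _ c) => [|j]; last by rewrite -{1}(t_c j) -(s_c j).
exact: (Svanishes_mono (kEnd_assoc (c := c)) (@kEnd_trace c) le_dm (@vanish_d c)).
Qed.

Lemma column_pigeonhole m (s : 'I_m -> 'I_n) : (\sum_(c < n) d c < m)%N ->
  exists c, (d c < column_count s c)%N.
Proof.
move=> lt_m; have [//|no_overflow] := pselect (exists c, (d c < column_count s c)%N).
have le_d c : (column_count s c <= d c)%N.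
  by rewrite leqNgt; apply/negP => overflow; apply: no_overflow; exists c.
have count_sum : (\sum_(c < n) column_count s c)%N = m.
  rewrite /column_count exchange_big /= -[RHS]card_ord -sum1_card.
  apply: eq_bigr => j _; rewrite (bigD1 (s j)) //= eqxx big1 // => c.
  by rewrite eq_sym => /negbTE ->.
suff : (m <= \sum_(c < n) d c)%N by rewrite leqNgt lt_m.
by rewrite -count_sum; apply: leq_sum => c _.
Qed.

Lemma Spc_matrix_vanish m (a : 'I_m -> AM) : (\sum_(c < n) d c < m)%N -> SA a = 0.
Proof.
move=> lt_m; pose P (x : AM) := exists ts : 'I_n * 'I_n, supported ts.1 ts.2 x.
apply: (@Spc_vanish_span _ _ _ _ _ _ mulA tauC (@Amul_addl k n C)
  (Atau_add alpha) (@Aadd00 k n C) P _ (fun p => entry_part p.1 p.2)) => [x|p x|b Pb].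
- exact: sum_entry_parts.
- by exists p; apply: entry_part_supported.
pose ts j := projT1 (cid (Pb j)).
have b_ts j : supported (ts j).1 (ts j).2 (b j) := projT2 (cid (Pb j)).
have [c overflow] := column_pigeonhole (fun j => (ts j).2) lt_m.
exact: Spc_column_overflow b_ts overflow.
Qed.

End Vanishing.

Local Open Scope ring_scope.

Theorem mainTheorem5 (k : fieldType) (char0 : [pchar k] =i pred0)
  (n : nat) (C : fincat n) (alpha : forall i : 'I_n, Mor C i i -> k)
  (Halpha : loop_fun alpha) (Hpc : cat_pseudochar alpha) :
  (forall x y : Amat k C, Atau alpha (Amul x y) = Atau alpha (Amul y x)) /\
  pseudochar (@Amul k n C) (Atau alpha) /\
  (forall degs : 'I_n -> nat,
     (forall i : 'I_n, deg_alpha_is alpha i (degs i)) ->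
     is_degree (@Amul k n C) (Atau alpha) (\sum_(i < n) degs i)%N).
Proof.
split; first exact: Atau_trace.
split.
  exists (\sum_(c < n) projT1 (cid (Hpc c)))%N => a.
  exact: (Spc_matrix_vanish Halpha (fun c => projT2 (cid (Hpc c)))).
move=> degs deg_c.
apply: (is_degree_trace_one (@AmulA k n C) (Atau_trace Halpha) (@Amul1 k n C) char0).
  by rewrite Atau_one natr_sum; apply: eq_bigr => c _; apply: degree_kEnd.
by move=> a; apply: (Spc_matrix_vanish Halpha (fun c => (deg_c c).1)).
Qed.
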